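(* Let $S$ be an expanding automaton semigroup and $H$ a subgroup of $S$ (a subsemigroup of $S$ which is a group, possibly with identity different from any identity of $S$). Then there is a self-similar group $G$ such that $H$ is isomorphic to a subgroup of $G$.
   Context: An expanding automaton is a quadruple $(Q,\Sigma,t,o)$ with $Q$ a finite set of states, $\Sigma$ a finite alphabet, $t:Q\times\Sigma\to Q$ and $o:Q\times\Sigma\to\Sigma^+$. Each state $q$ induces $q:\Sigma^*\to\Sigma^*$ by $q(\emptyset)=\emptyset$, $q(\sigma w)=o(q,\sigma)\,q'(w)$ with $q'=t(q,\sigma)$; an expanding automaton semigroup is the semigroup of maps generated under composition by the states. A self-similar group is the group generated by the states of an invertible synchronous automaton (output in $\Sigma$, $o(q,\cdot)$ a permutation of $\Sigma$ for each $q$) with possibly infinitely many states. *)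

From mathcomp Require Import all_boot all_fingroup.
Set Implicit Arguments. Unset Strict Implicit. Unset Printing Implicit Defensive.

Definition expanding_output (Q Sigma : Type) (o : Q -> Sigma -> seq Sigma) : Prop :=
  forall q s, o q s <> [::].

Fixpoint exp_act (Q Sigma : Type) (t : Q -> Sigma -> Q) (o : Q -> Sigma -> seq Sigma)
    (q : Q) (w : seq Sigma) {struct w} : seq Sigma :=
  match w with
  | [::] => [::]
  | s :: w' => o q s ++ exp_act t o (t q s) w'
  end.

Definition comp_states (Q Sigma : Type) (t : Q -> Sigma -> Q) (o : Q -> Sigma -> seq Sigma)
    (qs : seq Q) : seq Sigma -> seq Sigma :=
  foldr (fun q g => exp_act t o q \o g) id qs.

Definition exp_semigroup (Q Sigma : Type) (t : Q -> Sigma -> Q) (o : Q -> Sigma -> seq Sigma)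
    (f : seq Sigma -> seq Sigma) : Prop :=
  exists qs : seq Q, qs <> [::] /\ f = comp_states t o qs.

(* H is a subgroup of the semigroup S: a subsemigroup which is a group
   (identity e of H arbitrary, not necessarily an identity of S). *)
Definition subgroup_of (T : Type) (S H : T -> Prop) (mul : T -> T -> T) : Prop :=
  (forall h, H h -> S h) /\
  (forall h1 h2, H h1 -> H h2 -> H (mul h1 h2)) /\
  exists e, H e /\
    (forall h, H h -> mul e h = h /\ mul h e = h) /\
    (forall h, H h -> exists h', H h' /\ mul h h' = e /\ mul h' h = e).

(* invertible synchronous automaton, states of an arbitrary (possibly infinite) type *)
Fixpoint ss_act (P : Type) (A : finType) (t : P -> A -> P) (o : P -> {perm A})
    (q : P) (w : seq A) {struct w} : seq A :=
  match w with
  | [::] => [::]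
  | s :: w' => o q s :: ss_act t o (t q s) w'
  end.

Fixpoint ss_inv (P : Type) (A : finType) (t : P -> A -> P) (o : P -> {perm A})
    (q : P) (w : seq A) {struct w} : seq A :=
  match w with
  | [::] => [::]
  | s :: w' => let u := ((o q)^-1)%g s in u :: ss_inv t o (t q u) w'
  end.

Definition ss_group (P : Type) (A : finType) (t : P -> A -> P) (o : P -> {perm A})
    (g : seq A -> seq A) : Prop :=
  exists l : seq (P * bool),
    g = foldr (fun qb h => (if qb.2 then ss_act t o qb.1 else ss_inv t o qb.1) \o h) id l.

From mathcomp Require Import all_boot all_fingroup.
From Stdlib Require Import FunctionalExtensionality.
Set Implicit Arguments. Unset Strict Implicit. Unset Printing Implicit Defensive.

(** Every map of an expanding automaton semigroup is prefix-expanding: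
    f (u v) = f u r with |r| >= |v|.  Let e be the identity of H.  Each
    h in H maps the prefix-closed set Fix(e) of e-fixed words into itself,
    preserving lengths and prefixes, and injectively (its inverse h' gives
    h' h = e); since h = h e, h is determined by this restriction.  The
    restriction is a synchronous tree map, which we complete to an
    invertible synchronous automaton: the state (h, u) at a vertex u of
    Fix(e) sends a letter a to the last letter of h (u a) when u a is
    e-fixed, and otherwise matches the letters leaving Fix(e) at u with the
    equally many letters leaving Fix(e) at h u and then acts trivially. *)

Section PrefixExpanding.
Variable T : Type.

Definition prefix_expanding (f : seq T -> seq T) : Prop :=
  f [::] = [::] /\ forall u v, exists2 r, f (u ++ v) = f u ++ r & size v <= size r.

Lemma size_prefix_expanding f w : prefix_expanding f -> size w <= size (f w).
Proof. by move=> [f0 fM]; have [r -> Sr] := fM [::] w; rewrite f0. Qed.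

Lemma prefix_expanding_id : prefix_expanding id.
Proof. by split=> // u v; exists v. Qed.

Lemma prefix_expanding_comp f g :
  prefix_expanding f -> prefix_expanding g -> prefix_expanding (f \o g).
Proof.
move=> [f0 fM] [g0 gM]; split; first by rewrite /= g0 f0.
move=> u v; have [r1 E1 S1] := gM u v; have [r2 E2 S2] := fM (g u) r1.
by exists r2; rewrite /= ?E1 ?E2 // (leq_trans S1).
Qed.

End PrefixExpanding.

Section ExpandingAutomaton.
Variables (Q Sigma : Type) (t : Q -> Sigma -> Q) (o : Q -> Sigma -> seq Sigma).

Lemma exp_act_cat q u v :
  exp_act t o q (u ++ v) = exp_act t o q u ++ exp_act t o (foldl t q u) v.
Proof. by elim: u q => [|s u IH] q //=; rewrite IH catA. Qed.

Hypothesis ho : expanding_output o.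

Lemma size_exp_act q w : size w <= size (exp_act t o q w).
Proof.
elim: w q => [|s w IH] q //=; rewrite size_cat.
have := @ho q s; case: (o q s) => [//|x l] _ /=.
by rewrite addSn ltnS (leq_trans (IH (t q s))) // leq_addl.
Qed.

Lemma prefix_expanding_exp_act q : prefix_expanding (exp_act t o q).
Proof.
split=> // u v; exists (exp_act t o (foldl t q u) v); last exact: size_exp_act.
exact: exp_act_cat.
Qed.

Lemma prefix_expanding_exp_semigroup f :
  exp_semigroup t o f -> prefix_expanding f.
Proof.
move=> [qs [_ ->]]; elim: qs => [|q qs IH] /=; first exact: prefix_expanding_id.
exact: prefix_expanding_comp (prefix_expanding_exp_act q) IH.
Qed.

End ExpandingAutomaton.

Section ComplementBijection.
Variable S : finType.

(* Matches the complements of two equicardinal sets along their enumerations. *)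
Definition compl_bij (A B : {set S}) (a : S) : S :=
  nth a (enum (~: B)) (index a (enum (~: A))).

Lemma index_enum_setC_lt (A B : {set S}) a :
  #|A| = #|B| -> a \notin A -> index a (enum (~: A)) < size (enum (~: B)).
Proof.
move=> AB Na; rewrite -cardE -(ltn_add2l #|B|) cardsC -AB -(cardsC A).
by rewrite ltn_add2l cardE index_mem mem_enum inE.
Qed.

Lemma compl_bij_notin (A B : {set S}) a :
  #|A| = #|B| -> a \notin A -> compl_bij A B a \notin B.
Proof.
move=> AB Na; suff : compl_bij A B a \in enum (~: B) by rewrite mem_enum inE.
exact/mem_nth/index_enum_setC_lt.
Qed.

Lemma compl_bij_trans (A B D : {set S}) a :
  #|A| = #|B| -> #|A| = #|D| -> a \notin A ->
  compl_bij B D (compl_bij A B a) = compl_bij A D a.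
Proof.
move=> AB AD Na; rewrite /compl_bij index_uniq ?enum_uniq ?index_enum_setC_lt //.
exact/set_nth_default/index_enum_setC_lt.
Qed.

Lemma compl_bij_inj (A B : {set S}) a b :
  #|A| = #|B| -> a \notin A -> b \notin A -> compl_bij A B a = compl_bij A B b -> a = b.
Proof.
move=> AB Na Nb; rewrite /compl_bij (set_nth_default a b) ?index_enum_setC_lt // => E.
have := congr1 (fun x => index x (enum (~: B))) E.
rewrite !index_uniq ?enum_uniq ?index_enum_setC_lt // => /(congr1 (nth a (enum (~: A)))).
by rewrite !nth_index ?mem_enum ?inE.
Qed.

Definition injective_or_id (f : S -> S) x := if injectiveb f then f x else x.

Lemma injective_or_id_inj f : injective (injective_or_id f).
Proof. by move=> x y; rewrite /injective_or_id; case: ifP => [/injectiveP f_inj|_] //; apply: f_inj. Qed.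

Definition perm_of_fun (f : S -> S) : {perm S} := perm (@injective_or_id_inj f).

Lemma perm_of_funE f : injective f -> perm_of_fun f =1 f.
Proof. by move=> f_inj x; rewrite permE /injective_or_id; case: ifP => // /injectiveP. Qed.

End ComplementBijection.

Section FixedWords.
Variables (S : finType) (e : seq S -> seq S).

Definition fixed (w : seq S) := e w == w.

Definition extensions (u : seq S) : {set S} := [set a | fixed (rcons u a)].

Definition last_letter (h : seq S -> seq S) u a := last a (h (rcons u a)).

Record unit_pair (h h' : seq S -> seq S) : Prop := UnitPair {
  unit_exp : prefix_expanding h;
  unit_inv_exp : prefix_expanding h';
  unit_fixed : forall x, e (h x) = h x;
  unit_inv_fixed : forall x, e (h' x) = h' x;
  unit_invK : forall x, h' (h x) = e x;
  unit_K : forall x, h (h' x) = e x }.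

Lemma unit_pair_sym h h' : unit_pair h h' -> unit_pair h' h.
Proof. by case=> *; constructor. Qed.

Hypothesis e_exp : prefix_expanding e.

Lemma fixed_prefix u v : fixed (u ++ v) -> fixed u.
Proof.
move=> /eqP Fuv; have [r E Sr] := e_exp.2 u v.
have size_eu : size (e u) = size u.
  apply/eqP; rewrite eqn_leq size_prefix_expanding // andbT.
  by rewrite -(leq_add2r (size r)) -size_cat -E Fuv size_cat leq_add2l.
apply/eqP; have := congr1 (take (size u)) Fuv.
by rewrite E take_size_cat // take_size_cat.
Qed.

Lemma fixed_rcons u a : fixed (rcons u a) -> fixed u.
Proof. by rewrite -cats1; apply: fixed_prefix. Qed.

Section Unit.
Variables h h' : seq S -> seq S.
Hypothesis hh' : unit_pair h h'.

Lemma fixed_unit x : fixed (h x).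
Proof. by rewrite /fixed (unit_fixed hh'). Qed.

Lemma size_unit x : fixed x -> size (h x) = size x.
Proof.
move=> /eqP Fx; apply/eqP; rewrite eqn_leq (size_prefix_expanding x (unit_exp hh')) andbT.
by rewrite -{2}Fx -(unit_invK hh'); apply: size_prefix_expanding (unit_inv_exp hh').
Qed.

Lemma unit_inj_fixed x y : fixed x -> fixed y -> h x = h y -> x = y.
Proof.
by move=> /eqP Fx /eqP Fy /(congr1 h'); rewrite !(unit_invK hh') Fx Fy.
Qed.

Lemma unit_rcons u a : fixed (rcons u a) -> h (rcons u a) = rcons (h u) (last_letter h u a).
Proof.
move=> Fua; have Fu := fixed_rcons Fua.
have [r E _] := (unit_exp hh').2 u [:: a].
have := size_unit Fua; rewrite -cats1 E !size_cat (size_unit Fu) => /eqP.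
rewrite eqn_add2l; case: r E => [|c [|d r]] // E _.
by rewrite /last_letter -[rcons u a]cats1 E cats1 last_rcons.
Qed.

Lemma card_extensions_le u : fixed u -> #|extensions u| <= #|extensions (h u)|.
Proof.
move=> Fu; rewrite -(@card_in_imset _ _ (last_letter h u)).
  apply/subset_leq_card/subsetP => b /imsetP [a]; rewrite !inE => Fua ->.
  by rewrite -unit_rcons // fixed_unit.
move=> a b; rewrite !inE => Fua Fub E.
apply: (rcons_injr u); apply: (unit_inj_fixed Fua Fub).
by rewrite !unit_rcons // E.
Qed.

End Unit.

Lemma card_extensions h h' u :
  unit_pair h h' -> fixed u -> #|extensions u| = #|extensions (h u)|.
Proof.
move=> hh' Fu; apply/eqP; rewrite eqn_leq (card_extensions_le hh' Fu) /=.
have := card_extensions_le (unit_pair_sym hh') (fixed_unit hh' u).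
by rewrite (unit_invK hh') (eqP Fu).
Qed.

Definition step_fun h u a :=
  if fixed (rcons u a) then last_letter h u a
  else compl_bij (extensions u) (extensions (h u)) a.

Lemma step_fun_inj h h' u : unit_pair h h' -> fixed u -> injective (step_fun h u).
Proof.
move=> hh' Fu; have card_hu := card_extensions hh' Fu.
have stay_in a : fixed (rcons u a) -> fixed (rcons (h u) (last_letter h u a)).
  by move=> Fua; rewrite -(unit_rcons hh') // (fixed_unit hh').
have stay_out a : ~~ fixed (rcons u a) ->
    ~~ fixed (rcons (h u) (compl_bij (extensions u) (extensions (h u)) a)).
  by move=> Nua; have := compl_bij_notin card_hu (a := a); rewrite !inE; apply.
move=> a b; rewrite /step_fun.
case Fua: (fixed (rcons u a)); case Fub: (fixed (rcons u b)) => E.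
- apply: (rcons_injr u); apply: (unit_inj_fixed hh' Fua Fub).
  by rewrite !(unit_rcons hh') // E.
- by have := stay_out b; rewrite Fub -E stay_in // => /(_ isT).
- by have := stay_out a; rewrite Fua E stay_in // => /(_ isT).
- by apply: compl_bij_inj E; rewrite // inE ?Fua ?Fub.
Qed.

(* [None] is the trivial state; [Some (h, u)] is only reached for e-fixed [u]. *)
Definition state := option ((seq S -> seq S) * seq S).

Definition state_trans (s : state) (a : S) : state :=
  if s is Some (h, u) then (if fixed (rcons u a) then Some (h, rcons u a) else None)
  else None.

Definition state_perm (s : state) : {perm S} :=
  if s is Some (h, u) then perm_of_fun (step_fun h u) else 1%g.

Local Notation act := (ss_act state_trans state_perm).

Lemma act_None w : act None w = w.
Proof. by elim: w => [|a w IH] //=; rewrite perm1 IH. Qed.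

Lemma act_cons h h' u a w : unit_pair h h' -> fixed u ->
  act (Some (h, u)) (a :: w) = step_fun h u a :: act (state_trans (Some (h, u)) a) w.
Proof. by move=> hh' Fu /=; rewrite perm_of_funE //; apply: step_fun_inj hh' Fu. Qed.

Lemma act_fixed h h' u x : unit_pair h h' -> fixed (u ++ x) ->
  h u ++ act (Some (h, u)) x = h (u ++ x).
Proof.
move=> hh'; elim: x u => [|a x IH] u Fux; first by rewrite !cats0.
have Fua : fixed (rcons u a) by apply: (@fixed_prefix _ x); rewrite cat_rcons.
rewrite (act_cons _ _ hh') ?(fixed_prefix Fux) //= /step_fun Fua /=.
by rewrite -[u ++ _]cat_rcons -IH ?cat_rcons // (unit_rcons hh') // cat_rcons.
Qed.

Lemma act_nil h h' x : unit_pair h h' -> fixed x -> act (Some (h, [::])) x = h x.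
Proof. by move=> hh' Fx; rewrite -(act_fixed hh' (u := [::])) ?(unit_exp hh').1. Qed.

Lemma act_comp h1 h1' h2 h2' k u w :
  unit_pair h1 h1' -> unit_pair h2 h2' -> unit_pair (h1 \o h2) k -> fixed u ->
  act (Some (h1 \o h2, u)) w = act (Some (h1, h2 u)) (act (Some (h2, u)) w).
Proof.
move=> hh1 hh2 hh12; elim: w u => [|a w IH] u Fu //.
rewrite (act_cons _ _ hh12) // (act_cons _ _ hh2) // (act_cons _ _ hh1) ?(fixed_unit hh2) //=.
rewrite /step_fun; case Fua: (fixed (rcons u a)).
  have E2 := unit_rcons hh2 Fua; rewrite -E2 (fixed_unit hh2) //= IH //.
  have Fb : fixed (rcons (h2 u) (last_letter h2 u a)) by rewrite -E2 (fixed_unit hh2).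
  by rewrite {1}/last_letter /= E2 (unit_rcons hh1) // last_rcons.
have card2 := card_extensions hh2 Fu; have card12 := card_extensions hh12 Fu.
have := compl_bij_notin card2 (a := a); rewrite !inE Fua => /(_ isT) /negbTE ->.
by rewrite compl_bij_trans ?inE ?Fua // !act_None.
Qed.

End FixedWords.

Lemma unit_pair_of_subgroup (Sigma : finType) (S H : (seq Sigma -> seq Sigma) -> Prop) e :
  (forall f, S f -> prefix_expanding f) -> (forall h, H h -> S h) -> H e ->
  (forall h, H h -> e \o h = h /\ h \o e = h) ->
  (forall h, H h -> exists h', H h' /\ h \o h' = e /\ h' \o h = e) ->
  forall h, H h -> exists h', unit_pair e h h'.
Proof.
move=> S_exp HS He Hid Hinv h Hh; have [h' [Hh' [hh' h'h]]] := Hinv h Hh.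
exists h'; constructor; try exact/S_exp/HS.
- by move=> x; rewrite -[in RHS](Hid h Hh).1.
- by move=> x; rewrite -[in RHS](Hid h' Hh').1.
- by move=> x; rewrite -[in RHS]h'h.
- by move=> x; rewrite -[in RHS]hh'.
Qed.

Theorem mainTheorem11 (Q Sigma : finType) (t : Q -> Sigma -> Q)
    (o : Q -> Sigma -> seq Sigma) (ho : expanding_output o)
    (H : (seq Sigma -> seq Sigma) -> Prop)
    (hH : subgroup_of (exp_semigroup t o) H (fun f g => f \o g)) :
  exists (A : finType) (P : Type) (t' : P -> A -> P) (o' : P -> {perm A})
         (phi : (seq Sigma -> seq Sigma) -> (seq A -> seq A)),
    (forall h, H h -> ss_group t' o' (phi h)) /\
    (forall h1 h2, H h1 -> H h2 -> phi (h1 \o h2) = phi h1 \o phi h2) /\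
    (forall h1 h2, H h1 -> H h2 -> phi h1 = phi h2 -> h1 = h2).
Proof.
case: hH => [HS [Hmul [e [He [Hid Hinv]]]]].
have S_exp f : exp_semigroup t o f -> prefix_expanding f.
  exact: prefix_expanding_exp_semigroup.
have unitP := unit_pair_of_subgroup S_exp HS He Hid Hinv.
have e_exp := S_exp _ (HS _ He).
have fixed_nil : fixed e [::] by rewrite /fixed e_exp.1.
exists Sigma, (state Sigma), (state_trans e), (state_perm e),
  (fun h => ss_act (state_trans e) (state_perm e) (Some (h, [::]))).
split; [|split].
- by move=> h _; exists [:: (Some (h, [::]), true)].
- move=> h1 h2 H1 H2; apply: functional_extensionality => w /=.
  have [k1 hk1] := unitP _ H1; have [k2 hk2] := unitP _ H2.
  have [k12 hk12] := unitP _ (Hmul _ _ H1 H2).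
  by rewrite (act_comp e_exp w hk1 hk2 hk12 fixed_nil) (unit_exp hk2).1.
- move=> h1 h2 H1 H2 E; apply: functional_extensionality => x.
  have [k1 hk1] := unitP _ H1; have [k2 hk2] := unitP _ H2.
  have Fex : fixed e (e x) by rewrite /fixed -[in X in _ == X](Hid e He).1.
  rewrite -(Hid h1 H1).2 -(Hid h2 H2).2 /=.
  by rewrite -(act_nil e_exp hk1 Fex) -(act_nil e_exp hk2 Fex) E.
Qed.
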